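(* Let $\theta\in(0,\pi)$. Then for all $x,y\in S_\theta$, $$s_{S_\theta}(x,y)\le{\rm th}(\rho_{S_\theta}(x,y)/2)\le(\pi/\theta)\sin(\theta/2)\,s_{S_\theta}(x,y),$$ and this inequality is sharp.
   Context: $S_\theta=\{x\in\mathbb{C}:0<\arg(x)<\theta\}$. For a domain $G\subsetneq\mathbb{C}$, $s_G(x,y)=\frac{|x-y|}{\inf_{z\in\partial G}(|x-z|+|z-y|)}$. The hyperbolic metric of $\mathbb{H}^2=\{z:{\rm Im}\,z>0\}$ satisfies ${\rm th}(\rho_{\mathbb{H}^2}(u,v)/2)=|u-v|/|u-\overline{v}|$, and $\rho_{S_\theta}(x,y)=\rho_{\mathbb{H}^2}(x^{\pi/\theta},y^{\pi/\theta})$ (principal branch power, a conformal map of $S_\theta$ onto $\mathbb{H}^2$). *)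

From Stdlib Require Import Reals Lra.
From Coquelicot Require Import Coquelicot.
Open Scope R_scope.

(* Principal argument of z <> 0, with values in (-PI, PI]. *)
Definition Carg (z : C) : R :=
  if Rle_dec 0 (Im z) then acos (Re z / Cmod z) else - acos (Re z / Cmod z).

(* Principal branch power z^a = |z|^a e^{i a arg z} (z <> 0). *)
Definition Cpow_pr (z : C) (a : R) : C :=
  (Rpower (Cmod z) a * cos (a * Carg z), Rpower (Cmod z) a * sin (a * Carg z)).

Definition sector (theta : R) (x : C) : Prop :=
  x <> 0%C /\ 0 < Carg x /\ Carg x < theta.

Definition boundary (G : C -> Prop) (z : C) : Prop :=
  forall eps : R, 0 < eps ->
    (exists w, G w /\ Cmod (w - z) < eps) /\ (exists w, ~ G w /\ Cmod (w - z) < eps).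

Definition s_metric (G : C -> Prop) (x y : C) : R :=
  Cmod (x - y) /
  real (Glb_Rbar (fun t => exists z, boundary G z /\ t = Cmod (x - z) + Cmod (z - y))).

Definition th (t : R) : R := (exp t - exp (- t)) / (exp t + exp (- t)).

(* Hyperbolic metric of the upper half plane, i.e. the unique rho >= 0 with
   th(rho/2) = |u-v|/|u - conj v|:  rho = ln ((|u-conj v|+|u-v|)/(|u-conj v|-|u-v|)). *)
Definition rho_H (u v : C) : R :=
  ln ((Cmod (u - Cconj v) + Cmod (u - v)) / (Cmod (u - Cconj v) - Cmod (u - v))).

(* Hyperbolic metric of S_theta via the conformal map x |-> x^(PI/theta). *)
Definition rho_S (theta : R) (x y : C) : R :=
  rho_H (Cpow_pr x (PI / theta)) (Cpow_pr y (PI / theta)).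

From Stdlib Require Import Reals Lra Psatz.
From Coquelicot Require Import Coquelicot.
Open Scope R_scope.

(* Write x = r1 e^(i al), y = r2 e^(i be), a = PI/theta, tau = ln (r1/r2) / 2,
   m = (al - be)/2, p = (al + be)/2.  Then |x - y|^2 = 4 r1 r2 (sinh^2 tau + sin^2 m), and
   x^a, y^a obey the same formula with tau, m scaled by a, so that
   th (rho/2) = |x^a - y^a| / |x^a - conj y^a| is a ratio of two such expressions.  For s the
   shortest broken line through the boundary is the segment from x to the mirror image of y in
   the boundary ray closer to the midpoint of the arguments, so s = |x - y| / |x - y'| with
   |x - y'|^2 = 4 r1 r2 (sinh^2 tau + sin^2 p) (or p replaced by theta - p).  Both bounds become
   inequalities between such expressions: the lower one follows from the monotonicity of
   sin (a u) / sin u and from a sinh u <= sinh (a u); the upper one also needs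
   1 / sinh^2 t - a^2 / sinh^2 (a t) <= (a^2 - 1) / 3 and 6 v^2 <= sin^2 v (PI^2 + 2 v^2).
   Both constants are approached on the bisector, as the points move apart (constant 1) or
   together (constant a sin (theta/2)). *)

(** * Elementary inequalities *)

Lemma le_of_derive_nonneg (f df : R -> R) (a b : R) : a <= b ->
  (forall x, a <= x <= b -> is_derive f x (df x)) ->
  (forall x, a <= x <= b -> 0 <= df x) -> f a <= f b.
Proof.
  intros Hab Hd Hp.
  assert (Hin : forall x, Rmin a b <= x <= Rmax a b -> a <= x <= b).
  { rewrite Rmin_left, Rmax_right by lra. auto. }
  destruct (MVT_gen f a b df) as [c [Hc Heq]].
  - intros x Hx. apply Hd, Hin. lra.
  - intros x Hx. apply continuity_pt_filterlim.
    apply (ex_derive_continuous (K := R_AbsRing) (V := R_NormedModule)).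
    eexists. apply Hd, Hin, Hx.
  - assert (0 <= df c * (b - a)) by (apply Rmult_le_pos; [apply Hp, Hin | ]; lra).
    lra.
Qed.

Lemma nonneg_of_derive_nonneg (f df : R -> R) (u : R) : 0 <= u -> f 0 = 0 ->
  (forall x, 0 <= x <= u -> is_derive f x (df x)) ->
  (forall x, 0 <= x <= u -> 0 <= df x) -> 0 <= f u.
Proof. intros Hu H0 Hd Hp. rewrite <- H0. exact (le_of_derive_nonneg f df 0 u Hu Hd Hp). Qed.

Lemma sin_mul_le (a u : R) : 1 <= a -> 0 <= u -> a * u <= PI -> sin (a * u) <= a * sin u.
Proof.
  intros Ha Hu Hau.
  enough (0 <= a * sin u - sin (a * u)) by lra.
  apply (nonneg_of_derive_nonneg (fun v => a * sin v - sin (a * v))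
           (fun v => a * cos v - a * cos (a * v))); auto.
  - rewrite Rmult_0_r, sin_0. ring.
  - intros x _. auto_derive; auto. ring.
  - intros x Hx. assert (cos (a * x) <= cos x) by (apply cos_decr_1; nra). nra.
Qed.

Lemma sin_mul_ratio_antitone (a m p : R) : 1 <= a -> 0 < m -> m <= p -> a * p <= PI -> p < PI ->
  sin (a * p) * sin m <= sin (a * m) * sin p.
Proof.
  intros Ha Hm Hmp Hap Hp.
  assert (Hs : forall u, 0 < u <= p -> 0 < sin u) by (intros u Hu; apply sin_gt_0; lra).
  assert (Hnumer : forall u, 0 <= u <= p ->
            0 <= sin (a * u) * cos u - a * cos (a * u) * sin u).
  { intros u Hu.
    apply (nonneg_of_derive_nonneg (fun v => sin (a * v) * cos v - a * cos (a * v) * sin v)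
             (fun v => (a ^ 2 - 1) * sin (a * v) * sin v)); try lra.
    - rewrite Rmult_0_r, sin_0. ring.
    - intros x _. auto_derive; auto. ring.
    - intros x Hx. assert (0 <= sin (a * x)) by (apply sin_ge_0; nra).
      assert (0 <= sin x) by (apply sin_ge_0; lra).
      apply Rmult_le_pos; [apply Rmult_le_pos|]; nra. }
  assert (H : - (sin (a * m) / sin m) <= - (sin (a * p) / sin p)).
  { apply (le_of_derive_nonneg (fun v => - (sin (a * v) / sin v))
      (fun v => (sin (a * v) * cos v - a * cos (a * v) * sin v) / sin v ^ 2)); auto.
    - intros x Hx. assert (0 < sin x) by (apply Hs; lra). auto_derive; [lra|]. field. lra.
    - intros x Hx. assert (0 < sin x) by (apply Hs; lra).
      apply Rmult_le_pos; [apply Hnumer; lra|]. left. apply Rinv_0_lt_compat. nra. }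
  assert (0 < sin m) by (apply Hs; lra). assert (0 < sin p) by (apply Hs; lra).
  replace (sin (a * p) * sin m) with (sin (a * p) / sin p * (sin m * sin p)) by (field; lra).
  replace (sin (a * m) * sin p) with (sin (a * m) / sin m * (sin m * sin p)) by (field; lra).
  apply Rmult_le_compat_r; nra.
Qed.

Lemma sinh_nonneg (u : R) : 0 <= u -> 0 <= sinh u.
Proof.
  intros [Hu | <-]; [|rewrite sinh_0; lra].
  rewrite <- sinh_0. left. apply sinh_lt, Hu.
Qed.

Lemma sinh_pos (u : R) : 0 < u -> 0 < sinh u.
Proof. intros Hu. rewrite <- sinh_0. apply sinh_lt, Hu. Qed.

Lemma sinh_opp (u : R) : sinh (- u) = - sinh u.
Proof. unfold sinh. rewrite Ropp_involutive. field. Qed.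

Lemma sinh_abs_sq (u : R) : sinh (Rabs u) ^ 2 = sinh u ^ 2.
Proof. unfold Rabs. destruct (Rcase_abs u); [rewrite sinh_opp|]; ring. Qed.

Lemma cosh_sq (u : R) : cosh u ^ 2 = 1 + sinh u ^ 2.
Proof. unfold cosh, sinh. rewrite exp_Ropp. field. apply Rgt_not_eq, exp_pos. Qed.

Lemma cosh_pos (u : R) : 0 < cosh u.
Proof.
  unfold cosh. assert (0 < exp u) by apply exp_pos. assert (0 < exp (- u)) by apply exp_pos.
  lra.
Qed.

Lemma cosh_le (u v : R) : 0 <= u -> u <= v -> cosh u <= cosh v.
Proof.
  intros Hu Huv. apply (le_of_derive_nonneg cosh sinh); auto.
  - intros x _. unfold cosh, sinh. auto_derive; auto. field.
  - intros x Hx. apply sinh_nonneg. lra.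
Qed.

Ltac exp_field :=
  unfold sinh, cosh; rewrite ?exp_Ropp; field; repeat split; apply Rgt_not_eq, exp_pos.

Lemma mul_sinh_le (a u : R) : 1 <= a -> 0 <= u -> a * sinh u <= sinh (a * u).
Proof.
  intros Ha Hu.
  enough (0 <= sinh (a * u) - a * sinh u) by lra.
  apply (nonneg_of_derive_nonneg (fun v => sinh (a * v) - a * sinh v)
           (fun v => a * cosh (a * v) - a * cosh v)); auto.
  - rewrite Rmult_0_r, sinh_0. ring.
  - intros x _. unfold sinh, cosh. auto_derive; auto. exp_field.
  - intros x Hx. assert (cosh x <= cosh (a * x)) by (apply cosh_le; nra). nra.
Qed.

Lemma mul_sinh_sq_le (a u : R) : 1 <= a -> 0 <= u -> a ^ 2 * sinh u ^ 2 <= sinh (a * u) ^ 2.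
Proof.
  intros Ha Hu. assert (H := mul_sinh_le a u Ha Hu).
  assert (0 <= sinh u) by (apply sinh_nonneg, Hu).
  replace (a ^ 2 * sinh u ^ 2) with ((a * sinh u) ^ 2) by ring. apply pow_incr. nra.
Qed.

Lemma sq_div_sinh_sq_add_le (t1 t2 : R) : 0 < t1 -> t1 <= t2 ->
  t1 ^ 2 / sinh t1 ^ 2 + t1 ^ 2 / 3 <= t2 ^ 2 / sinh t2 ^ 2 + t2 ^ 2 / 3.
Proof.
  intros H1 H2.
  pose (psi u := sinh u - u * cosh u + sinh u ^ 3 / 3).
  assert (Hpsi : forall u, 0 <= u -> 0 <= psi u).
  { intros u Hu.
    apply (nonneg_of_derive_nonneg psi (fun v => sinh v * (sinh v * cosh v - v))); auto.
    - unfold psi; cbv beta. rewrite sinh_0. field.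
    - intros x _. unfold psi, sinh, cosh. auto_derive; auto. exp_field.
    - intros x Hx. apply Rmult_le_pos; [apply sinh_nonneg; lra|].
      enough (0 <= sinh x * cosh x - x) by lra.
      apply (nonneg_of_derive_nonneg (fun v => sinh v * cosh v - v) (fun v => 2 * sinh v ^ 2));
        try lra.
      + rewrite sinh_0. ring.
      + intros y _. unfold sinh, cosh. auto_derive; auto. exp_field.
      + intros y _. nra. }
  apply (le_of_derive_nonneg (fun v => v ^ 2 / sinh v ^ 2 + v ^ 2 / 3)
           (fun v => 2 * v * psi v / sinh v ^ 3)); auto.
  - intros x Hx. assert (0 < sinh x) by (apply sinh_pos; lra).
    unfold psi, sinh in *. unfold cosh. auto_derive; [apply Rgt_not_eq; nra|]. field. lra.
  - intros x Hx. assert (0 < sinh x) by (apply sinh_pos; lra).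
    assert (0 <= psi x) by (apply Hpsi; lra).
    apply Rmult_le_pos; [nra|]. left. apply Rinv_0_lt_compat, pow_lt. lra.
Qed.

Lemma inv_sinh_sq_sub_le (a t : R) : 1 <= a -> 0 < t ->
  / sinh t ^ 2 - a ^ 2 / sinh (a * t) ^ 2 <= (a ^ 2 - 1) / 3.
Proof.
  intros Ha Ht.
  assert (H := sq_div_sinh_sq_add_le t (a * t) Ht ltac:(nra)).
  assert (0 < sinh t) by (apply sinh_pos; lra).
  assert (0 < sinh (a * t)) by (apply sinh_pos; nra).
  replace ((a * t) ^ 2 / sinh (a * t) ^ 2) with (t ^ 2 * (a ^ 2 / sinh (a * t) ^ 2)) in H
    by (field; lra).
  replace (t ^ 2 / sinh t ^ 2) with (t ^ 2 * / sinh t ^ 2) in H by (field; lra).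
  apply Rmult_le_reg_l with (t ^ 2); nra.
Qed.

Lemma PI_lt_16_5 : PI < 16 / 5.
Proof.
  destruct (Rlt_or_le PI (16 / 5)) as [H|H]; auto.
  destruct (cos_bound (8 / 5) 0) as [_ Hub]; try lra.
  unfold cos_approx, cos_term in Hub. simpl in Hub.
  destruct (Req_dec (PI / 2) (8 / 5)) as [E|E].
  - assert (cos (8 / 5) = 0) by (rewrite <- E; apply cos_PI2). lra.
  - assert (0 < cos (8 / 5)) by (apply cos_gt_0; lra). lra.
Qed.

Lemma sin_sq_lower_bound (v : R) : 0 < v -> v <= PI / 2 ->
  6 * v ^ 2 <= sin v ^ 2 * (PI ^ 2 + 2 * v ^ 2).
Proof.
  intros H0 H1. assert (HP := PI_lt_16_5). assert (HP3 : 3 < PI) by (assert (H := PI2_3_2); lra).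
  destruct (Rle_or_lt v 1) as [Hv|Hv].
  - destruct (sin_bound v 1) as [Hs _]; try lra.
    unfold sin_approx, sin_term in Hs. simpl in Hs.
    assert (v ^ 5 / 120 - v ^ 7 / 5040 >= 0).
    { assert (v ^ 2 <= 1) by nra. assert (0 <= v ^ 5) by (apply pow_le; lra). nra. }
    assert (0 <= v - v ^ 3 / 6) by nra.
    assert ((v - v ^ 3 / 6) ^ 2 <= sin v ^ 2) by (apply pow_incr; lra).
    assert (5 / 6 <= 1 - v ^ 2 / 6) by nra.
    assert (25 / 36 <= (1 - v ^ 2 / 6) ^ 2) by nra.
    assert (6 <= (1 - v ^ 2 / 6) ^ 2 * (PI ^ 2 + 2 * v ^ 2)) by nra.
    nra.
  - set (w := PI / 2 - v).
    destruct (cos_bound w 1) as [Hc _]; try (unfold w; lra).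
    unfold cos_approx, cos_term in Hc. simpl in Hc.
    assert (w ^ 4 / 24 - w ^ 6 / 720 >= 0).
    { assert (w ^ 2 <= 4) by (unfold w; nra). assert (0 <= w ^ 4) by nra. nra. }
    replace (sin v) with (cos w) by (unfold w; apply cos_shift).
    assert (0 <= w <= 3 / 5) by (unfold w; lra).
    replace v with (PI / 2 - w) by (unfold w; ring). clearbody w.
    assert ((1 - w ^ 2 / 2) ^ 2 <= cos w ^ 2) by (apply pow_incr; nra).
    assert (0 <= 3 * PI ^ 2 / 2 - 2 * PI * w + 2 * w ^ 2 <= 15.36) by nra.
    assert (0 <= w - w ^ 3 / 4 <= w) by nra.
    assert (0 <= 4 * PI - 4 * w - (w - w ^ 3 / 4) * (3 * PI ^ 2 / 2 - 2 * PI * w + 2 * w ^ 2))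
      by nra.
    nra.
Qed.

(** * The two comparison inequalities *)

Definition sinh_sin_sq (t m : R) : R := sinh t ^ 2 + sin m ^ 2.

Lemma sinh_sin_sq_abs_l (t m : R) : sinh_sin_sq (Rabs t) m = sinh_sin_sq t m.
Proof. unfold sinh_sin_sq. rewrite sinh_abs_sq. reflexivity. Qed.

Lemma sinh_sin_sq_abs_r (t m : R) : sinh_sin_sq t (Rabs m) = sinh_sin_sq t m.
Proof. unfold sinh_sin_sq, Rabs. destruct (Rcase_abs m); [rewrite sin_neg|]; ring. Qed.

Lemma sinh_sin_sq_nonneg (t m : R) : 0 <= sinh_sin_sq t m.
Proof. unfold sinh_sin_sq. nra. Qed.

Lemma sin_sq_sub_sin_sq (p m : R) : sin p ^ 2 - sin m ^ 2 = sin (p + m) * sin (p - m).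
Proof.
  rewrite sin_plus, sin_minus.
  assert (H1 := sin2_cos2 p). assert (H2 := sin2_cos2 m). unfold Rsqr in *. nra.
Qed.

Lemma sin_sq_sub_mul_le (a m p : R) : 1 <= a -> 0 <= m <= p -> a * (p + m) <= PI ->
  sin (a * p) ^ 2 - sin (a * m) ^ 2 <= a ^ 2 * (sin p ^ 2 - sin m ^ 2).
Proof.
  intros Ha Hm Hap.
  rewrite !sin_sq_sub_sin_sq.
  replace (a * p + a * m) with (a * (p + m)) by ring.
  replace (a * p - a * m) with (a * (p - m)) by ring.
  assert (0 <= sin (a * (p + m))) by (apply sin_ge_0; nra).
  assert (0 <= sin (a * (p - m))) by (apply sin_ge_0; nra).
  assert (sin (a * (p + m)) <= a * sin (p + m)) by (apply sin_mul_le; nra).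
  assert (sin (a * (p - m)) <= a * sin (p - m)) by (apply sin_mul_le; nra).
  replace (a ^ 2 * (sin (p + m) * sin (p - m)))
    with ((a * sin (p + m)) * (a * sin (p - m))) by ring.
  apply Rmult_le_compat; lra.
Qed.

Lemma sinh_sin_sq_ratio_le_scaled (a t m p : R) :
  1 <= a -> Rabs m < p -> a * (p + Rabs m) <= PI -> p + Rabs m < PI ->
  sinh_sin_sq t m * sinh_sin_sq (a * t) (a * p)
  <= sinh_sin_sq (a * t) (a * m) * sinh_sin_sq t p.
Proof.
  intros Ha Hmp Hap Hp.
  rewrite <- (sinh_sin_sq_abs_l t m), <- (sinh_sin_sq_abs_l t p),
    <- (sinh_sin_sq_abs_l (a * t) (a * p)), <- (sinh_sin_sq_abs_l (a * t) (a * m)),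
    <- (sinh_sin_sq_abs_r _ m), <- (sinh_sin_sq_abs_r _ (a * m)), !Rabs_mult,
    (Rabs_pos_eq a) by lra.
  assert (Ht := Rabs_pos t). assert (Hm := Rabs_pos m).
  set (t' := Rabs t) in *. set (m' := Rabs m) in *. clearbody t' m'.
  unfold sinh_sin_sq.
  assert (HX := mul_sinh_sq_le a t' Ha Ht).
  assert (Hdiff := sin_sq_sub_mul_le a m' p Ha ltac:(lra) Hap).
  assert (Hpm : sin m' ^ 2 <= sin p ^ 2).
  { enough (0 <= sin p ^ 2 - sin m' ^ 2) by lra. rewrite sin_sq_sub_sin_sq.
    apply Rmult_le_pos; apply sin_ge_0; lra. }
  assert (Hcross : sin (a * p) ^ 2 * sin m' ^ 2 <= sin (a * m') ^ 2 * sin p ^ 2).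
  { destruct (Req_dec m' 0) as [->|Hm0]; [rewrite sin_0; nra|].
    assert (H := sin_mul_ratio_antitone a m' p Ha ltac:(lra) ltac:(lra) ltac:(nra) ltac:(lra)).
    assert (0 <= sin m') by (apply sin_ge_0; lra).
    assert (0 <= sin (a * p)) by (apply sin_ge_0; nra).
    replace (sin (a * p) ^ 2 * sin m' ^ 2) with ((sin (a * p) * sin m') ^ 2) by ring.
    replace (sin (a * m') ^ 2 * sin p ^ 2) with ((sin (a * m') * sin p) ^ 2) by ring.
    apply pow_incr. nra. }
  assert (sinh t' ^ 2 * (sin (a * p) ^ 2 - sin (a * m') ^ 2)
          <= sinh (a * t') ^ 2 * (sin p ^ 2 - sin m' ^ 2)).
  { apply Rle_trans with (sinh t' ^ 2 * (a ^ 2 * (sin p ^ 2 - sin m' ^ 2)));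
      [apply Rmult_le_compat_l; nra|].
    rewrite <- Rmult_assoc. apply Rmult_le_compat_r; nra. }
  lra.
Qed.

Lemma sinh_sq_mul_scaled_le (a t m : R) : 1 <= a -> 0 <= t -> 0 <= m -> a * m <= PI ->
  sinh t ^ 2 * sinh_sin_sq (a * t) (a * m) <= sinh (a * t) ^ 2 * sinh_sin_sq t m.
Proof.
  intros Ha Ht Hm Ham. unfold sinh_sin_sq.
  assert (HX := mul_sinh_sq_le a t Ha Ht).
  assert (sin (a * m) <= a * sin m) by (apply sin_mul_le; nra).
  assert (0 <= sin (a * m)) by (apply sin_ge_0; nra).
  assert (sin (a * m) ^ 2 <= a ^ 2 * sin m ^ 2).
  { replace (a ^ 2 * sin m ^ 2) with ((a * sin m) ^ 2) by ring. apply pow_incr. lra. }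
  assert (0 <= sinh t ^ 2) by nra. assert (0 <= sin m ^ 2) by nra.
  nra.
Qed.

Lemma PI_div_ge_1 (theta : R) : 0 < theta < PI -> 1 <= PI / theta.
Proof. intros Hth. apply (Rmult_le_reg_r theta); [lra|]. field_simplify; lra. Qed.

Section Upper_comparison.

Variable theta : R.
Hypothesis Htheta : 0 < theta < PI.

Let a := PI / theta.

Let a_ge_1 : 1 <= a := PI_div_ge_1 theta Htheta.

Let a_mul_half : a * (theta / 2) = PI / 2.
Proof. unfold a. field. lra. Qed.

Lemma sin_half_sq_bound : 3 <= sin (theta / 2) ^ 2 * (2 * a ^ 2 + 1).
Proof.
  assert (H := sin_sq_lower_bound (theta / 2) ltac:(lra) ltac:(lra)).
  replace PI with (2 * a * (theta / 2)) in H by (rewrite Rmult_assoc, a_mul_half; field).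
  apply (Rmult_le_reg_r (2 * (theta / 2) ^ 2)); nra.
Qed.

Lemma sin_le_sin_half_mul (p : R) : 0 <= p <= theta / 2 ->
  sin p <= sin (theta / 2) * sin (a * p).
Proof.
  intros Hp.
  destruct (Req_dec p 0) as [->|Hp0]; [rewrite Rmult_0_r, sin_0; lra|].
  assert (H := sin_mul_ratio_antitone a p (theta / 2) a_ge_1 ltac:(lra) ltac:(lra)
                 ltac:(lra) ltac:(lra)).
  rewrite a_mul_half, sin_PI2 in H. lra.
Qed.

Lemma sinh_sin_sq_ratio_le_half (t p : R) : 0 <= t -> 0 <= p <= theta / 2 ->
  sinh_sin_sq (a * t) (a * (theta / 2)) * sinh_sin_sq t p
  <= sinh_sin_sq (a * t) (a * p) * sinh_sin_sq t (theta / 2).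
Proof.
  intros Ht Hp. unfold sinh_sin_sq. rewrite a_mul_half, sin_PI2, pow1.
  set (s := sin (theta / 2)).
  assert (HX := mul_sinh_sq_le a t a_ge_1 Ht).
  set (x := sinh t ^ 2) in *. set (X := sinh (a * t) ^ 2) in *.
  assert (0 <= x) by (unfold x; nra).
  assert (Hsp := sin_le_sin_half_mul p Hp). fold s in Hsp.
  assert (0 <= sin p) by (apply sin_ge_0; lra).
  assert (Hps : sin p ^ 2 <= s ^ 2 * sin (a * p) ^ 2).
  { replace (s ^ 2 * sin (a * p) ^ 2) with ((s * sin (a * p)) ^ 2) by ring.
    apply pow_incr. lra. }
  assert (Hcos : 1 - sin (a * p) ^ 2 <= a ^ 2 * (s ^ 2 - sin p ^ 2)).
  { assert (Hsq := sin_sq_sub_mul_le a p (theta / 2) a_ge_1 ltac:(lra) ltac:(nra)).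
    rewrite a_mul_half, sin_PI2 in Hsq. fold s in Hsq. lra. }
  assert (0 <= s ^ 2 - sin p ^ 2).
  { unfold s. rewrite sin_sq_sub_sin_sq. apply Rmult_le_pos; apply sin_ge_0; lra. }
  assert (x * (1 - sin (a * p) ^ 2) <= X * (s ^ 2 - sin p ^ 2)).
  { apply Rle_trans with (x * (a ^ 2 * (s ^ 2 - sin p ^ 2))); [apply Rmult_le_compat_l; lra|].
    rewrite <- Rmult_assoc. apply Rmult_le_compat_r; nra. }
  nra.
Qed.

Lemma sinh_sin_sq_half_le (t : R) : 0 <= t ->
  sinh (a * t) ^ 2 * sinh_sin_sq t (theta / 2)
  <= (a * sin (theta / 2)) ^ 2 * sinh t ^ 2 * sinh_sin_sq (a * t) (a * (theta / 2)).
Proof.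
  intros Ht. unfold sinh_sin_sq. rewrite a_mul_half, sin_PI2, pow1.
  assert (Hs := sin_half_sq_bound). set (s := sin (theta / 2)) in *.
  destruct (Req_dec t 0) as [->|Ht0]; [rewrite Rmult_0_r, sinh_0; nra|].
  assert (0 < sinh t) by (apply sinh_pos; lra).
  assert (0 < sinh (a * t)) by (apply sinh_pos; nra).
  assert (Hinv := inv_sinh_sq_sub_le a t a_ge_1 ltac:(lra)).
  set (x := sinh t ^ 2) in *. set (X := sinh (a * t) ^ 2) in *.
  assert (0 < x) by (unfold x; nra). assert (0 < X) by (unfold X; nra).
  assert (HXx : X - a ^ 2 * x <= (a ^ 2 - 1) / 3 * (x * X)).
  { replace (X - a ^ 2 * x) with ((/ x - a ^ 2 / X) * (x * X)) by (field; lra).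
    apply Rmult_le_compat_r; nra. }
  assert (s ^ 2 * (X - a ^ 2 * x) <= s ^ 2 * ((a ^ 2 - 1) / 3 * (x * X)))
    by (apply Rmult_le_compat_l; nra).
  assert (0 <= (a ^ 2 * s ^ 2 - 1 - s ^ 2 * (a ^ 2 - 1) / 3) * (x * X))
    by (apply Rmult_le_pos; nra).
  nra.
Qed.

Lemma sin_scaled_ratio_le (m p : R) : 0 <= m <= p -> p <= theta / 2 ->
  sin (a * m) ^ 2 * sin p ^ 2 <= (a * sin (theta / 2)) ^ 2 * sin m ^ 2 * sin (a * p) ^ 2.
Proof.
  intros Hm Hp.
  assert (sin (a * m) <= a * sin m) by (apply sin_mul_le; nra).
  assert (sin p <= sin (theta / 2) * sin (a * p)) by (apply sin_le_sin_half_mul; lra).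
  assert (0 <= sin (a * m)) by (apply sin_ge_0; nra).
  assert (0 <= sin p) by (apply sin_ge_0; lra).
  assert (sin (a * m) * sin p <= a * sin m * (sin (theta / 2) * sin (a * p)))
    by (apply Rmult_le_compat; lra).
  replace (sin (a * m) ^ 2 * sin p ^ 2) with ((sin (a * m) * sin p) ^ 2) by ring.
  replace ((a * sin (theta / 2)) ^ 2 * sin m ^ 2 * sin (a * p) ^ 2)
    with ((a * sin m * (sin (theta / 2) * sin (a * p))) ^ 2) by ring.
  apply pow_incr. nra.
Qed.

Lemma scaled_ratio_le_sinh_sin_sq_ratio (t m p : R) : Rabs m <= p <= theta / 2 ->
  sinh_sin_sq (a * t) (a * m) * sinh_sin_sq t p
  <= (a * sin (theta / 2)) ^ 2 * sinh_sin_sq t m * sinh_sin_sq (a * t) (a * p).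
Proof.
  intros Hmp.
  rewrite <- (sinh_sin_sq_abs_l t m), <- (sinh_sin_sq_abs_l t p),
    <- (sinh_sin_sq_abs_l (a * t) (a * p)), <- (sinh_sin_sq_abs_l (a * t) (a * m)),
    <- (sinh_sin_sq_abs_r _ m), <- (sinh_sin_sq_abs_r _ (a * m)), !Rabs_mult,
    (Rabs_pos_eq a) by lra.
  assert (Ht := Rabs_pos t). assert (Hm := Rabs_pos m).
  set (t' := Rabs t) in *. set (m' := Rabs m) in *. clearbody t' m'.
  destruct (Req_dec t' 0) as [->|Ht0].
  { unfold sinh_sin_sq. rewrite Rmult_0_r, sinh_0.
    assert (Hsin := sin_scaled_ratio_le m' p ltac:(lra) ltac:(lra)). nra. }
  (* With [D := sinh_sin_sq], multiply
     [D (a t) (a m) / D t m <= sinh (a t) ^ 2 / sinh t ^ 2] by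
     [D t p / D (a t) (a p) <= D t (theta / 2) / Dhalf <= C2 * sinh t ^ 2 / sinh (a t) ^ 2]. *)
  set (C2 := (a * sin (theta / 2)) ^ 2).
  set (Dhalf := sinh_sin_sq (a * t') (a * (theta / 2))).
  assert (Hhalf := sinh_sin_sq_ratio_le_half t' p Ht ltac:(lra)). fold Dhalf in Hhalf.
  assert (Hfar := sinh_sin_sq_half_le t' Ht). fold C2 Dhalf in Hfar.
  assert (Hnear := sinh_sq_mul_scaled_le a t' m' a_ge_1 Ht Hm ltac:(nra)).
  assert (HD := sinh_sin_sq_nonneg).
  assert (Hx : 0 < sinh t' ^ 2) by (assert (0 < sinh t') by (apply sinh_pos; lra); nra).
  assert (HH : 0 < Dhalf) by (unfold Dhalf, sinh_sin_sq; rewrite a_mul_half, sin_PI2; nra).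
  apply (Rmult_le_reg_l (sinh t' ^ 2 * Dhalf)); [nra|].
  apply Rle_trans with ((sinh (a * t') ^ 2 * sinh_sin_sq t' m')
                        * (sinh_sin_sq (a * t') (a * p) * sinh_sin_sq t' (theta / 2))).
  { replace (sinh t' ^ 2 * Dhalf * (sinh_sin_sq (a * t') (a * m') * sinh_sin_sq t' p))
      with ((sinh t' ^ 2 * sinh_sin_sq (a * t') (a * m')) * (Dhalf * sinh_sin_sq t' p)) by ring.
    apply Rmult_le_compat; try apply Rmult_le_pos; auto; nra. }
  replace (sinh (a * t') ^ 2 * sinh_sin_sq t' m'
           * (sinh_sin_sq (a * t') (a * p) * sinh_sin_sq t' (theta / 2)))
    with (sinh_sin_sq t' m' * sinh_sin_sq (a * t') (a * p)
          * (sinh (a * t') ^ 2 * sinh_sin_sq t' (theta / 2))) by ring.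
  replace (sinh t' ^ 2 * Dhalf * (C2 * sinh_sin_sq t' m' * sinh_sin_sq (a * t') (a * p)))
    with (sinh_sin_sq t' m' * sinh_sin_sq (a * t') (a * p) * (C2 * sinh t' ^ 2 * Dhalf)) by ring.
  apply Rmult_le_compat_l; [apply Rmult_le_pos|]; auto.
Qed.

End Upper_comparison.

(** * Polar coordinates and the sector *)

Lemma Cmod_sub_sq (w z : C) : Cmod (w - z) ^ 2 = (fst w - fst z) ^ 2 + (snd w - snd z) ^ 2.
Proof. rewrite Cmod2_alt. simpl. ring. Qed.

Lemma Cmod_sub_sym (w z : C) : Cmod (w - z) = Cmod (z - w).
Proof. replace (w - z)%C with (- (z - w))%C by ring. apply Cmod_opp. Qed.

Lemma Cmod_sub_triangle (w z u : C) : Cmod (w - u) <= Cmod (w - z) + Cmod (z - u).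
Proof. replace (w - u)%C with ((w - z) + (z - u))%C by ring. apply Cmod_triangle. Qed.

Lemma Cmod_le_of_sq (z w : C) : Cmod z ^ 2 <= Cmod w ^ 2 -> Cmod z <= Cmod w.
Proof.
  intros H. assert (0 <= Cmod z) by apply Cmod_ge_0. assert (0 <= Cmod w) by apply Cmod_ge_0.
  nra.
Qed.

Lemma Cmod_eq_of_sq (z : C) (k : R) : 0 <= k -> Cmod z ^ 2 = k ^ 2 -> Cmod z = k.
Proof. intros Hk H. assert (0 <= Cmod z) by apply Cmod_ge_0. nra. Qed.

Lemma Cmod_pos_of_sq (z : C) : 0 < Cmod z ^ 2 -> 0 < Cmod z.
Proof. intros H. destruct (Cmod_ge_0 z) as [|E]; [assumption|]. rewrite <- E in H. lra. Qed.

Definition polar (r al : R) : C := (r * cos al, r * sin al).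

Lemma Cmod_polar (r al : R) : 0 <= r -> Cmod (polar r al) = r.
Proof.
  intros Hr. apply Cmod_eq_of_sq; auto. rewrite Cmod2_alt. unfold polar, Re, Im. simpl.
  assert (H := sin2_cos2 al). unfold Rsqr in H. nra.
Qed.

Lemma Carg_polar (r al : R) : 0 < r -> 0 <= al <= PI -> Carg (polar r al) = al.
Proof.
  intros Hr Hal. unfold Carg. rewrite Cmod_polar by lra. unfold polar, Re, Im. simpl.
  destruct (Rle_dec 0 (r * sin al)) as [_|N].
  - replace (r * cos al / r) with (cos al) by (field; lra). apply acos_cos; auto.
  - exfalso. assert (0 <= sin al) by (apply sin_ge_0; lra). nra.
Qed.

Lemma polar_neq0 (r al : R) : 0 < r -> polar r al <> 0%C.
Proof. intros Hr E. apply (f_equal Cmod) in E. rewrite Cmod_polar, Cmod_0 in E; lra. Qed.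

Lemma Cpow_pr_polar (r al b : R) : 0 < r -> 0 <= al <= PI ->
  Cpow_pr (polar r al) b = polar (Rpower r b) (b * al).
Proof. intros Hr Hal. unfold Cpow_pr. rewrite Cmod_polar, Carg_polar by lra. reflexivity. Qed.

Lemma Cconj_polar (r al : R) : Cconj (polar r al) = polar r (- al).
Proof. unfold Cconj, polar. simpl. rewrite cos_neg, sin_neg. f_equal. ring. Qed.

Lemma Cmod_sub_polar_sq (r R al be : R) : 0 < r -> 0 < R ->
  Cmod (polar r al - polar R be) ^ 2
  = 4 * r * R * (sinh ((ln r - ln R) / 2) ^ 2 + sin ((al - be) / 2) ^ 2).
Proof.
  intros Hr HR. rewrite Cmod_sub_sq. unfold polar. cbn [fst snd].
  assert (Hc1 := sin2_cos2 al). assert (Hc2 := sin2_cos2 be). unfold Rsqr in *.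
  assert (Hcm : cos (al - be) = 1 - 2 * sin ((al - be) / 2) ^ 2).
  { replace (al - be) with (2 * ((al - be) / 2)) at 1 by field. rewrite cos_2a_sin. ring. }
  rewrite cos_minus in Hcm.
  set (tau := (ln r - ln R) / 2).
  assert (HE : exp tau * exp tau = r / R).
  { rewrite <- exp_plus. replace (tau + tau) with (ln r + - ln R) by (unfold tau; field).
    rewrite exp_plus, exp_Ropp, !exp_ln; auto. }
  assert (Hsh : 4 * r * R * sinh tau ^ 2 = (r - R) ^ 2).
  { unfold sinh. rewrite exp_Ropp. assert (0 < exp tau) by apply exp_pos.
    replace r with (R * (exp tau * exp tau)) at 1 2 by (rewrite HE; field; lra).
    field. lra. }
  rewrite Rmult_plus_distr_l, Hsh.
  replace (4 * r * R * sin ((al - be) / 2) ^ 2)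
    with (2 * r * R * (1 - (cos al * cos be + sin al * sin be))) by (rewrite Hcm; ring).
  nra.
Qed.

Lemma polar_Cmod_Carg (w : C) : w <> 0%C -> 0 <= snd w ->
  w = polar (Cmod w) (Carg w) /\ 0 <= Carg w <= PI /\ 0 < Cmod w.
Proof.
  intros Hw H2.
  assert (Hm : 0 < Cmod w).
  { destruct (Cmod_ge_0 w) as [|E]; auto. symmetry in E. apply Cmod_eq_0 in E. contradiction. }
  assert (Hm2 := Cmod2_alt w). unfold Re, Im in Hm2.
  set (c := fst w / Cmod w).
  assert (Hc : -1 <= c <= 1).
  { assert (-Cmod w <= fst w <= Cmod w) by nra.
    assert (c * Cmod w = fst w) by (unfold c; field; lra).
    split; nra. }
  unfold Carg. destruct (Rle_dec 0 (Im w)) as [_|N]; [|unfold Im in N; lra].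
  unfold Re. fold c.
  split; [|split; [apply acos_bound | exact Hm]].
  unfold polar. rewrite cos_acos, sin_acos by auto.
  assert (Hs : 1 - c² = (snd w / Cmod w) ^ 2).
  { unfold Rsqr, c.
    replace (snd w / Cmod w) with (snd w * / Cmod w) by reflexivity.
    replace (fst w / Cmod w) with (fst w * / Cmod w) by reflexivity.
    assert (Hi : Cmod w * / Cmod w = 1) by (field; lra).
    nra. }
  rewrite Hs, sqrt_pow2 by (apply Rdiv_le_0_compat; lra).
  destruct w as [w1 w2]. unfold c. simpl. f_equal; field; lra.
Qed.

Lemma sector_polar (theta r al : R) : 0 < theta < PI -> 0 < r -> 0 < al < theta ->
  sector theta (polar r al).
Proof.
  intros Hth Hr Hal. split; [apply polar_neq0; lra|]. rewrite Carg_polar; lra.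
Qed.

Lemma sector_polar_inv (theta : R) (w : C) : 0 < theta < PI -> sector theta w ->
  exists r al, 0 < r /\ 0 < al < theta /\ w = polar r al.
Proof.
  intros Hth [Hw [H1 H2]].
  assert (Hs : 0 <= snd w).
  { destruct (Rle_dec 0 (snd w)) as [|N]; auto.
    unfold Carg in H1. destruct (Rle_dec 0 (Im w)) as [X|_]; [unfold Im in X; lra|].
    assert (H := acos_bound (Re w / Cmod w)). lra. }
  destruct (polar_Cmod_Carg w Hw Hs) as [E [_ Hr]].
  exists (Cmod w), (Carg w). auto.
Qed.

(** [ray_coord theta w] and [normal_coord theta w] are the coordinates of [w] along the ray
    [arg = theta] and along its normal pointing into the sector. *)
Definition normal_coord (theta : R) (w : C) : R := fst w * sin theta - snd w * cos theta.
Definition ray_coord (theta : R) (w : C) : R := fst w * cos theta + snd w * sin theta.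

Definition reflect_ray (theta : R) (w : C) : C :=
  (fst w - 2 * normal_coord theta w * sin theta, snd w + 2 * normal_coord theta w * cos theta).

Lemma normal_coord_polar (theta r al : R) :
  normal_coord theta (polar r al) = r * sin (theta - al).
Proof. unfold normal_coord, polar. simpl. rewrite sin_minus. ring. Qed.

Lemma ray_coord_polar (theta r al : R) : ray_coord theta (polar r al) = r * cos (theta - al).
Proof. unfold ray_coord, polar. simpl. rewrite cos_minus. ring. Qed.

Lemma reflect_ray_polar (theta r al : R) :
  reflect_ray theta (polar r al) = polar r (2 * theta - al).
Proof.
  unfold reflect_ray. rewrite normal_coord_polar. unfold polar. cbn [fst snd].
  replace (2 * theta - al) with (theta + (theta - al)) by ring.
  assert (Hal : al = theta - (theta - al)) by ring.
  set (b := theta - al) in *. rewrite Hal.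
  rewrite cos_plus, sin_plus, !cos_minus, !sin_minus. f_equal; ring.
Qed.

Lemma normal_coord_sub (theta : R) (w z : C) :
  normal_coord theta (w - z) = normal_coord theta w - normal_coord theta z.
Proof. unfold normal_coord. simpl. ring. Qed.

Lemma ray_coord_sub (theta : R) (w z : C) :
  ray_coord theta (w - z) = ray_coord theta w - ray_coord theta z.
Proof. unfold ray_coord. simpl. ring. Qed.

Lemma normal_coord_add_scal (theta : R) (z u : C) (d : R) :
  normal_coord theta (z + RtoC d * u)%C = normal_coord theta z + d * normal_coord theta u.
Proof. unfold normal_coord. simpl. ring. Qed.

Lemma ray_coord_add_scal (theta : R) (z u : C) (d : R) :
  ray_coord theta (z + RtoC d * u)%C = ray_coord theta z + d * ray_coord theta u.
Proof. unfold ray_coord. simpl. ring. Qed.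

Lemma polar_ray_coord (theta : R) (z : C) : normal_coord theta z = 0 ->
  z = polar (ray_coord theta z) theta.
Proof.
  unfold normal_coord, ray_coord, polar. intros Hz.
  assert (Hc := sin2_cos2 theta). unfold Rsqr in Hc.
  destruct z as [z1 z2]. simpl in *. set (s := sin theta) in *. set (c := cos theta) in *.
  f_equal.
  - replace z1 with (z1 * (s * s + c * c)) at 1 by (rewrite Hc; ring).
    replace ((z1 * c + z2 * s) * c) with (z1 * (s * s + c * c) - s * (z1 * s - z2 * c)) by ring.
    rewrite Hz. ring.
  - replace z2 with (z2 * (s * s + c * c)) at 1 by (rewrite Hc; ring).
    replace ((z1 * c + z2 * s) * s) with (z2 * (s * s + c * c) + c * (z1 * s - z2 * c)) by ring.
    rewrite Hz. ring.
Qed.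

Lemma sector_iff (theta : R) (w : C) : 0 < theta < PI ->
  (sector theta w <-> 0 < snd w /\ 0 < normal_coord theta w).
Proof.
  intros Hth. split.
  - intros Hw. destruct (sector_polar_inv theta w Hth Hw) as (r & al & Hr & Hal & ->).
    rewrite normal_coord_polar. unfold polar. simpl.
    assert (0 < sin al) by (apply sin_gt_0; lra).
    assert (0 < sin (theta - al)) by (apply sin_gt_0; lra).
    split; nra.
  - intros [H1 H2].
    assert (Hw : w <> 0%C) by (intros E; rewrite E in H1; simpl in H1; lra).
    destruct (polar_Cmod_Carg w Hw ltac:(lra)) as [E [Hb Hr]].
    rewrite E in H1, H2. rewrite normal_coord_polar in H2. unfold polar in H1. simpl in H1.
    set (al := Carg w) in *.
    assert (Hsa : 0 < sin al) by nra.
    assert (Hst : 0 < sin (theta - al)) by nra.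
    split; [exact Hw|split].
    + destruct (Rle_lt_or_eq_dec 0 al (proj1 Hb)) as [|Z]; auto.
      rewrite <- Z, sin_0 in Hsa. lra.
    + destruct (Rlt_or_le al theta) as [|L]; auto.
      assert (0 <= sin (al - theta)) by (apply sin_ge_0; lra).
      replace (theta - al) with (- (al - theta)) in Hst by ring. rewrite sin_neg in Hst. lra.
Qed.

(** * The triangular ratio metric of the sector *)

Lemma boundary_of_dirs (G : C -> Prop) (z u v : C) : Cmod u = 1 -> Cmod v = 1 ->
  (forall d, 0 < d -> G (z + RtoC d * u)%C) -> (forall d, 0 < d -> ~ G (z + RtoC d * v)%C) ->
  boundary G z.
Proof.
  intros Hu Hv Hin Hout eps Heps.
  assert (Hdist : forall w, Cmod (z + RtoC (eps / 2) * w - z) = eps / 2 * Cmod w).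
  { intros w. replace (z + RtoC (eps / 2) * w - z)%C with (RtoC (eps / 2) * w)%C by ring.
    rewrite Cmod_mult, Cmod_R, Rabs_pos_eq; lra. }
  split; [exists (z + RtoC (eps / 2) * u)%C | exists (z + RtoC (eps / 2) * v)%C];
    rewrite Hdist, ?Hu, ?Hv.
  - split; [apply Hin|]; lra.
  - split; [apply Hout|]; lra.
Qed.

Lemma snd_add_scal (z u : C) (d : R) : snd (z + RtoC d * u)%C = snd z + d * snd u.
Proof. simpl. ring. Qed.

Lemma boundary_sector_of (theta : R) (z v : C) : 0 < theta < PI ->
  0 <= snd z -> 0 <= normal_coord theta z -> Cmod v = 1 ->
  (forall d, 0 < d -> ~ sector theta (z + RtoC d * v)%C) -> boundary (sector theta) z.
Proof.
  intros Hth Hz Nz Hv Hout.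
  apply (boundary_of_dirs _ _ (polar 1 (theta / 2)) v); auto; [apply Cmod_polar; lra|].
  intros d Hd. apply sector_iff; auto.
  rewrite snd_add_scal, normal_coord_add_scal, normal_coord_polar.
  replace (theta - theta / 2) with (theta / 2) by field.
  assert (0 < sin (theta / 2)) by (apply sin_gt_0; lra).
  unfold polar. simpl. split; nra.
Qed.

Lemma boundary_sector_real (theta t : R) : 0 < theta < PI -> 0 <= t ->
  boundary (sector theta) (t, 0).
Proof.
  intros Hth Ht.
  assert (0 < sin theta) by (apply sin_gt_0; lra).
  apply (boundary_sector_of theta _ (polar 1 (- (PI / 2)))); auto.
  - simpl. lra.
  - unfold normal_coord. simpl. nra.
  - apply Cmod_polar. lra.
  - intros d Hd Hs. apply sector_iff in Hs; auto. rewrite snd_add_scal in Hs.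
    unfold polar in Hs. simpl in Hs. rewrite sin_neg, sin_PI2 in Hs. lra.
Qed.

Lemma boundary_sector_ray (theta t : R) : 0 < theta < PI -> 0 <= t ->
  boundary (sector theta) (polar t theta).
Proof.
  intros Hth Ht.
  assert (0 < sin theta) by (apply sin_gt_0; lra).
  apply (boundary_sector_of theta _ (polar 1 (theta + PI / 2))); auto.
  - unfold polar. simpl. nra.
  - rewrite normal_coord_polar, Rminus_diag, sin_0. lra.
  - apply Cmod_polar. lra.
  - intros d Hd Hs. apply sector_iff in Hs; auto.
    rewrite normal_coord_add_scal, !normal_coord_polar in Hs.
    replace (theta - (theta + PI / 2)) with (- (PI / 2)) in Hs by ring.
    rewrite Rminus_diag, sin_0, sin_neg, sin_PI2 in Hs. lra.
Qed.

Lemma Cmod_sub_conj_sq (w y : C) : Cmod (w - Cconj y) ^ 2 = Cmod (w - y) ^ 2 + 4 * snd w * snd y.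
Proof. rewrite !Cmod_sub_sq. simpl. ring. Qed.

Lemma Cmod_sub_reflect_sq (theta : R) (w y : C) :
  Cmod (w - reflect_ray theta y) ^ 2
  = Cmod (w - y) ^ 2 + 4 * normal_coord theta w * normal_coord theta y.
Proof.
  rewrite !Cmod_sub_sq. unfold reflect_ray, normal_coord. simpl.
  assert (Hc := sin2_cos2 theta). unfold Rsqr in Hc.
  set (s := sin theta) in *. set (c := cos theta) in *.
  match goal with |- ?L = ?R =>
    assert (E : L - R = 4 * (fst y * s - snd y * c) ^ 2 * (s * s + c * c - 1)) by ring end.
  rewrite Hc in E. lra.
Qed.

(** Reflect [y] in the boundary line that separates [w] from the sector. *)
Lemma path_outside_ge (theta : R) (x y w : C) : 0 < theta < PI ->
  sector theta x -> sector theta y -> ~ sector theta w ->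
  Rmin (Cmod (x - Cconj y)) (Cmod (x - reflect_ray theta y)) <= Cmod (x - w) + Cmod (w - y).
Proof.
  intros Hth Hx Hy Hw.
  apply sector_iff in Hx, Hy; auto. rewrite sector_iff in Hw; auto.
  destruct (Rle_or_lt (snd w) 0) as [H2|H2].
  - apply Rle_trans with (Cmod (x - Cconj y)); [apply Rmin_l|].
    apply Rle_trans with (Cmod (x - w) + Cmod (w - Cconj y)); [apply Cmod_sub_triangle|].
    apply Rplus_le_compat_l, Cmod_le_of_sq. rewrite Cmod_sub_conj_sq. nra.
  - assert (HN : normal_coord theta w <= 0) by (apply Rnot_lt_le; intros HN; apply Hw; auto).
    apply Rle_trans with (Cmod (x - reflect_ray theta y)); [apply Rmin_r|].
    apply Rle_trans with (Cmod (x - w) + Cmod (w - reflect_ray theta y));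
      [apply Cmod_sub_triangle|].
    apply Rplus_le_compat_l, Cmod_le_of_sq. rewrite Cmod_sub_reflect_sq. nra.
Qed.

(** Every boundary point is a limit of outside points. *)
Lemma path_boundary_ge (theta : R) (x y z : C) : 0 < theta < PI ->
  sector theta x -> sector theta y -> boundary (sector theta) z ->
  Rmin (Cmod (x - Cconj y)) (Cmod (x - reflect_ray theta y)) <= Cmod (x - z) + Cmod (z - y).
Proof.
  intros Hth Hx Hy Hz.
  set (m0 := Rmin (Cmod (x - Cconj y)) (Cmod (x - reflect_ray theta y))).
  apply Rnot_lt_le. intros L.
  destruct (Hz ((m0 - (Cmod (x - z) + Cmod (z - y))) / 2) ltac:(lra)) as [_ [w [Hw Hd]]].
  assert (H := path_outside_ge theta x y w Hth Hx Hy Hw). fold m0 in H.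
  assert (H1 := Cmod_sub_triangle x z w). assert (H2 := Cmod_sub_triangle w z y).
  rewrite (Cmod_sub_sym z w) in H1. lra.
Qed.

Lemma Cmod_segment_split (x u : C) (l : R) : 0 <= l <= 1 ->
  Cmod (x - (x + RtoC l * (u - x))) + Cmod (x + RtoC l * (u - x) - u) = Cmod (x - u).
Proof.
  intros Hl.
  replace (x - (x + RtoC l * (u - x)))%C with (RtoC l * (x - u))%C by ring.
  replace (x + RtoC l * (u - x) - u)%C with (RtoC (1 - l) * (x - u))%C
    by (apply injective_projections; simpl; ring).
  rewrite !Cmod_mult, !Cmod_R, !Rabs_pos_eq by lra. ring.
Qed.

Lemma div_add_bounds (u v : R) : 0 < u -> 0 < v -> 0 <= u / (u + v) <= 1.
Proof.
  intros Hu Hv. assert (E : u / (u + v) * (u + v) = u) by (field; lra).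
  split; [apply Rdiv_le_0_compat|]; nra.
Qed.

Lemma path_conj_attained (theta : R) (x y : C) : 0 < theta < PI ->
  0 < snd x -> 0 < snd y -> 0 <= fst x * snd y + fst y * snd x ->
  exists z, boundary (sector theta) z /\ Cmod (x - z) + Cmod (z - y) = Cmod (x - Cconj y).
Proof.
  intros Hth Hx Hy Hxy.
  set (l := snd x / (snd x + snd y)).
  assert (Hl : 0 <= l <= 1) by (apply div_add_bounds; lra).
  set (z := (x + RtoC l * (Cconj y - x))%C).
  assert (Ez : z = ((fst x * snd y + fst y * snd x) / (snd x + snd y), 0)).
  { unfold z, l. apply injective_projections; simpl; field; lra. }
  exists z. split; [rewrite Ez; apply boundary_sector_real, Rdiv_le_0_compat; lra|].
  replace (Cmod (z - y)) with (Cmod (z - Cconj y)).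
  - apply Cmod_segment_split, Hl.
  - apply Cmod_eq_of_sq; [apply Cmod_ge_0|]. rewrite Cmod_sub_conj_sq, Ez. simpl. ring.
Qed.

Lemma path_reflect_attained (theta : R) (x y : C) : 0 < theta < PI ->
  0 < normal_coord theta x -> 0 < normal_coord theta y ->
  0 <= ray_coord theta x * normal_coord theta y + ray_coord theta y * normal_coord theta x ->
  exists z, boundary (sector theta) z /\
            Cmod (x - z) + Cmod (z - y) = Cmod (x - reflect_ray theta y).
Proof.
  intros Hth Hx Hy Hxy.
  assert (Hc := sin2_cos2 theta). unfold Rsqr in Hc.
  set (l := normal_coord theta x / (normal_coord theta x + normal_coord theta y)).
  assert (Hl : 0 <= l <= 1) by (apply div_add_bounds; lra).
  set (t := (ray_coord theta x * normal_coord theta y + ray_coord theta y * normal_coord theta x)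
            / (normal_coord theta x + normal_coord theta y)).
  set (z := (x + RtoC l * (reflect_ray theta y - x))%C).
  assert (Nrefl : normal_coord theta (reflect_ray theta y) = - normal_coord theta y).
  { unfold normal_coord at 1, reflect_ray. cbn [fst snd].
    match goal with |- ?L = _ => replace L with
      (normal_coord theta y
       - 2 * normal_coord theta y * (sin theta * sin theta + cos theta * cos theta))
      by (unfold normal_coord; ring) end.
    rewrite Hc. ring. }
  assert (Drefl : ray_coord theta (reflect_ray theta y) = ray_coord theta y).
  { unfold ray_coord, reflect_ray. simpl. ring. }
  assert (Nz : normal_coord theta z = 0).
  { unfold z. rewrite normal_coord_add_scal, normal_coord_sub, Nrefl. unfold l. field. lra. }
  assert (Ez : z = polar t theta).
  { rewrite (polar_ray_coord theta z Nz). f_equal.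
    unfold z. rewrite ray_coord_add_scal, ray_coord_sub, Drefl. unfold t, l. field. lra. }
  exists z. split; [rewrite Ez; apply boundary_sector_ray, Rdiv_le_0_compat; lra|].
  replace (Cmod (z - y)) with (Cmod (z - reflect_ray theta y)).
  - apply Cmod_segment_split, Hl.
  - apply Cmod_eq_of_sq; [apply Cmod_ge_0|].
    rewrite Cmod_sub_reflect_sq, Ez, normal_coord_polar, Rminus_diag, sin_0. ring.
Qed.

Lemma s_metric_eq_of_path (G : C -> Prop) (x y : C) (D : R) :
  (exists z, boundary G z /\ Cmod (x - z) + Cmod (z - y) = D) ->
  (forall z, boundary G z -> D <= Cmod (x - z) + Cmod (z - y)) ->
  s_metric G x y = Cmod (x - y) / D.
Proof.
  intros [z0 [Hz0 HD]] Hlb. unfold s_metric.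
  rewrite (is_glb_Rbar_unique _ D); [reflexivity|]. split.
  - intros t [z [Hz ->]]. apply Hlb, Hz.
  - intros b Hb. apply Hb. exists z0. auto.
Qed.

Lemma th_half_ln (q : R) : 0 < q -> th (ln q / 2) = (q - 1) / (q + 1).
Proof.
  intros Hq. unfold th.
  assert (He : exp (ln q / 2) * exp (ln q / 2) = q).
  { rewrite <- exp_plus. replace (ln q / 2 + ln q / 2) with (ln q) by field. apply exp_ln, Hq. }
  rewrite exp_Ropp. assert (0 < exp (ln q / 2)) by apply exp_pos.
  set (e := exp (ln q / 2)) in *. rewrite <- He. field. split; nra.
Qed.

Lemma th_half_rho_H (u v : C) : 0 < snd u -> 0 < snd v ->
  th (rho_H u v / 2) = Cmod (u - v) / Cmod (u - Cconj v).
Proof.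
  intros Hu Hv. unfold rho_H.
  assert (HAB := Cmod_sub_conj_sq u v).
  set (A := Cmod (u - Cconj v)) in *. set (B := Cmod (u - v)) in *.
  assert (0 <= A) by apply Cmod_ge_0. assert (0 <= B) by apply Cmod_ge_0.
  assert (B < A) by nra.
  rewrite th_half_ln by (apply Rdiv_lt_0_compat; lra).
  field. split; lra.
Qed.

(** * The two-sided estimate *)

Lemma div_le_div_of_sq (P Q U V k l d1 d2 e1 e2 : R) :
  0 <= P -> 0 < Q -> 0 <= U -> 0 < V -> 0 < k -> 0 < l ->
  P ^ 2 = k * d1 -> Q ^ 2 = k * d2 -> U ^ 2 = l * e1 -> V ^ 2 = l * e2 ->
  d1 * e2 <= e1 * d2 -> P / Q <= U / V.
Proof.
  intros HP HQ HU HV Hk Hl EP EQ EU EV Hd.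
  assert (Hsq : (P * V) ^ 2 <= (U * Q) ^ 2).
  { replace ((P * V) ^ 2) with (k * l * (d1 * e2)) by (rewrite Rpow_mult_distr, EP, EV; ring).
    replace ((U * Q) ^ 2) with (k * l * (e1 * d2)) by (rewrite Rpow_mult_distr, EU, EQ; ring).
    apply Rmult_le_compat_l; nra. }
  assert (P * V <= U * Q) by (apply Rsqr_incr_0_var; [rewrite !Rsqr_pow2; exact Hsq | nra]).
  apply (Rmult_le_reg_r (Q * V)); [nra|].
  replace (P / Q * (Q * V)) with (P * V) by (field; lra).
  replace (U / V * (Q * V)) with (U * Q) by (field; lra). lra.
Qed.

Section Polar_pair.

Variables theta r1 r2 al be : R.
Hypothesis Htheta : 0 < theta < PI.
Hypothesis Hr1 : 0 < r1.
Hypothesis Hr2 : 0 < r2.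
Hypothesis Hal : 0 < al < theta.
Hypothesis Hbe : 0 < be < theta.

Let a := PI / theta.
Let x := polar r1 al.
Let y := polar r2 be.
Let u := polar (Rpower r1 a) (a * al).
Let v := polar (Rpower r2 a) (a * be).
Let tau := (ln r1 - ln r2) / 2.
Let m := (al - be) / 2.
Let p := (al + be) / 2.

Let a_ge_1 : 1 <= a := PI_div_ge_1 theta Htheta.

Let a_mul_theta : a * theta = PI.
Proof. unfold a. field. lra. Qed.

Lemma polar_dist_sq : Cmod (x - y) ^ 2 = 4 * r1 * r2 * sinh_sin_sq tau m.
Proof. apply Cmod_sub_polar_sq; auto. Qed.

Lemma polar_dist_conj_sq : Cmod (x - Cconj y) ^ 2 = 4 * r1 * r2 * sinh_sin_sq tau p.
Proof.
  unfold x, y. rewrite Cconj_polar, Cmod_sub_polar_sq by auto.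
  unfold sinh_sin_sq, tau, p. replace ((al - - be) / 2) with ((al + be) / 2) by field.
  reflexivity.
Qed.

Lemma polar_dist_reflect_sq :
  Cmod (x - reflect_ray theta y) ^ 2 = 4 * r1 * r2 * sinh_sin_sq tau (theta - p).
Proof.
  unfold x, y. rewrite reflect_ray_polar, Cmod_sub_polar_sq by auto.
  unfold sinh_sin_sq, tau, p.
  replace ((al - (2 * theta - be)) / 2) with (- (theta - (al + be) / 2)) by field.
  rewrite sin_neg. ring.
Qed.

Lemma th_half_rho_S_polar : th (rho_S theta x y / 2) = Cmod (u - v) / Cmod (u - Cconj v).
Proof.
  unfold rho_S, x, y. fold a. rewrite !Cpow_pr_polar by lra.
  apply th_half_rho_H; unfold polar; simpl;
    (apply Rmult_lt_0_compat; [apply exp_pos | apply sin_gt_0; nra]).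
Qed.

Lemma polar_image_dist_sq :
  Cmod (u - v) ^ 2 = 4 * Rpower r1 a * Rpower r2 a * sinh_sin_sq (a * tau) (a * m).
Proof.
  unfold u, v. rewrite Cmod_sub_polar_sq by apply exp_pos.
  rewrite !ln_Rpower. unfold sinh_sin_sq, tau, m. do 4 f_equal; field.
Qed.

Lemma polar_image_dist_conj_sq :
  Cmod (u - Cconj v) ^ 2 = 4 * Rpower r1 a * Rpower r2 a * sinh_sin_sq (a * tau) (a * p).
Proof.
  unfold v. rewrite Cconj_polar. unfold u. rewrite Cmod_sub_polar_sq by apply exp_pos.
  rewrite !ln_Rpower. unfold sinh_sin_sq, tau, p. do 4 f_equal; field.
Qed.

Let x_in_sector : sector theta x.
Proof. apply sector_polar; auto. Qed.

Let y_in_sector : sector theta y.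
Proof. apply sector_polar; auto. Qed.

Lemma s_metric_polar_conj_case : al + be <= theta ->
  s_metric (sector theta) x y = Cmod (x - y) / Cmod (x - Cconj y).
Proof.
  intros Hs. apply s_metric_eq_of_path.
  - apply path_conj_attained; auto; unfold x, y, polar; simpl.
    + apply Rmult_lt_0_compat; [lra | apply sin_gt_0; lra].
    + apply Rmult_lt_0_compat; [lra | apply sin_gt_0; lra].
    + assert (0 <= sin (al + be)) by (apply sin_ge_0; lra). rewrite sin_plus in *.
      replace (r1 * cos al * (r2 * sin be) + r2 * cos be * (r1 * sin al))
        with (r1 * r2 * (sin al * cos be + cos al * sin be)) by ring.
      apply Rmult_le_pos; nra.
  - intros z Hz.
    eapply Rle_trans; [|apply (path_boundary_ge theta); auto using x_in_sector, y_in_sector].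
    apply Rmin_glb; [lra|]. apply Cmod_le_of_sq.
    rewrite polar_dist_conj_sq, polar_dist_reflect_sq. apply Rmult_le_compat_l; [nra|].
    unfold sinh_sin_sq. enough (0 <= sin (theta - p) ^ 2 - sin p ^ 2) by lra.
    rewrite sin_sq_sub_sin_sq. unfold p. apply Rmult_le_pos; apply sin_ge_0; lra.
Qed.

Lemma s_metric_polar_reflect_case : theta <= al + be ->
  s_metric (sector theta) x y = Cmod (x - y) / Cmod (x - reflect_ray theta y).
Proof.
  intros Hs. apply s_metric_eq_of_path.
  - apply path_reflect_attained; auto; unfold x, y;
      rewrite ?ray_coord_polar, ?normal_coord_polar.
    + apply Rmult_lt_0_compat; [lra | apply sin_gt_0; lra].
    + apply Rmult_lt_0_compat; [lra | apply sin_gt_0; lra].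
    + assert (0 <= sin ((theta - al) + (theta - be))) by (apply sin_ge_0; lra).
      rewrite sin_plus in *.
      replace (r1 * cos (theta - al) * (r2 * sin (theta - be))
               + r2 * cos (theta - be) * (r1 * sin (theta - al)))
        with (r1 * r2 * (sin (theta - al) * cos (theta - be) + cos (theta - al) * sin (theta - be)))
        by ring.
      apply Rmult_le_pos; nra.
  - intros z Hz.
    eapply Rle_trans; [|apply (path_boundary_ge theta); auto using x_in_sector, y_in_sector].
    apply Rmin_glb; [|lra]. apply Cmod_le_of_sq.
    rewrite polar_dist_conj_sq, polar_dist_reflect_sq. apply Rmult_le_compat_l; [nra|].
    unfold sinh_sin_sq. enough (0 <= sin p ^ 2 - sin (theta - p) ^ 2) by lra.
    rewrite sin_sq_sub_sin_sq. unfold p. apply Rmult_le_pos; apply sin_ge_0; lra.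
Qed.

Let image_dist_conj_pos : 0 < Cmod (u - Cconj v).
Proof.
  apply Cmod_pos_of_sq. rewrite polar_image_dist_conj_sq.
  assert (0 < sin (a * p)) by (apply sin_gt_0; unfold p; nra).
  assert (0 < Rpower r1 a) by apply exp_pos. assert (0 < Rpower r2 a) by apply exp_pos.
  apply Rmult_lt_0_compat; [nra|]. unfold sinh_sin_sq. nra.
Qed.

Let boundary_dist_pos (q Qq : R) : 0 < q < theta -> 0 <= Qq ->
  Qq ^ 2 = 4 * r1 * r2 * sinh_sin_sq tau q -> 0 < Qq.
Proof.
  intros Hq HQ EQ. destruct HQ as [|<-]; [assumption|].
  assert (0 < sin q) by (apply sin_gt_0; lra).
  assert (0 < 4 * r1 * r2 * sinh_sin_sq tau q)
    by (apply Rmult_lt_0_compat; [nra | unfold sinh_sin_sq; nra]).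
  rewrite <- EQ in *. lra.
Qed.

(** [Qq] is the distance from [x] to the mirror image of [y] in the boundary ray realizing
    [s]: [q] is [p] or [theta - p]. *)
Let ratio_lower (q Qq : R) : 0 <= Qq -> Qq ^ 2 = 4 * r1 * r2 * sinh_sin_sq tau q ->
  sin (a * q) = sin (a * p) -> Rabs m < q -> q + Rabs m < theta ->
  Cmod (x - y) / Qq <= Cmod (u - v) / Cmod (u - Cconj v).
Proof.
  intros HQ EQ Haq Hmq Hq.
  assert (Hm := Rabs_pos m).
  assert (0 < Rpower r1 a) by apply exp_pos. assert (0 < Rpower r2 a) by apply exp_pos.
  apply (div_le_div_of_sq _ _ _ _ (4 * r1 * r2) (4 * Rpower r1 a * Rpower r2 a)
           (sinh_sin_sq tau m) (sinh_sin_sq tau q)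
           (sinh_sin_sq (a * tau) (a * m)) (sinh_sin_sq (a * tau) (a * p)));
    auto using Cmod_ge_0, image_dist_conj_pos, polar_dist_sq, polar_image_dist_sq,
      polar_image_dist_conj_sq;
    [apply (boundary_dist_pos q); auto; lra | nra | nra |].
  - unfold sinh_sin_sq at 2. rewrite <- Haq.
    apply sinh_sin_sq_ratio_le_scaled; try lra. rewrite <- a_mul_theta.
    apply Rmult_le_compat_l; lra.
Qed.

Let ratio_upper (q Qq : R) : 0 <= Qq -> Qq ^ 2 = 4 * r1 * r2 * sinh_sin_sq tau q ->
  sin (a * q) = sin (a * p) -> 0 < q -> Rabs m <= q <= theta / 2 ->
  Cmod (u - v) / Cmod (u - Cconj v) <= a * sin (theta / 2) * (Cmod (x - y) / Qq).
Proof.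
  intros HQ EQ Haq Hq Hmq.
  assert (0 < Rpower r1 a) by apply exp_pos. assert (0 < Rpower r2 a) by apply exp_pos.
  assert (0 < sin (theta / 2)) by (apply sin_gt_0; lra).
  assert (HQ' := boundary_dist_pos q Qq ltac:(lra) HQ EQ).
  replace (a * sin (theta / 2) * (Cmod (x - y) / Qq))
    with (a * sin (theta / 2) * Cmod (x - y) / Qq) by (field; lra).
  apply (div_le_div_of_sq _ _ _ _ (4 * Rpower r1 a * Rpower r2 a) (4 * r1 * r2)
           (sinh_sin_sq (a * tau) (a * m)) (sinh_sin_sq (a * tau) (a * p))
           ((a * sin (theta / 2)) ^ 2 * sinh_sin_sq tau m) (sinh_sin_sq tau q));
    auto using Cmod_ge_0, image_dist_conj_pos, polar_image_dist_sq, polar_image_dist_conj_sq;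
    try nra.
  - apply Rmult_le_pos; [|apply Cmod_ge_0]. assert (0 < a) by lra. nra.
  - rewrite Rpow_mult_distr, polar_dist_sq. ring.
  - unfold sinh_sin_sq at 2 4. rewrite <- Haq.
    apply (scaled_ratio_le_sinh_sin_sq_ratio theta Htheta). lra.
Qed.

Let abs_half_diff_lt : Rabs m < p /\ p + Rabs m < theta /\
  Rabs m < theta - p /\ theta - p + Rabs m < theta.
Proof. unfold m, p, Rabs. destruct (Rcase_abs _); lra. Qed.

Let sin_mul_reflect : sin (a * (theta - p)) = sin (a * p).
Proof. rewrite <- sin_PI_x, <- a_mul_theta. f_equal. ring. Qed.

Lemma th_rho_S_bounds_polar :
  s_metric (sector theta) x y <= th (rho_S theta x y / 2) /\
  th (rho_S theta x y / 2) <= PI / theta * sin (theta / 2) * s_metric (sector theta) x y.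
Proof.
  rewrite th_half_rho_S_polar. fold a.
  destruct abs_half_diff_lt as (H1 & H2 & H3 & H4). assert (Hm := Rabs_pos m).
  destruct (Rle_lt_dec (al + be) theta) as [Hs|Hs].
  - rewrite s_metric_polar_conj_case by exact Hs.
    split; [apply (ratio_lower p) | apply (ratio_upper p)];
      auto using Cmod_ge_0, polar_dist_conj_sq; unfold p in *; lra.
  - rewrite s_metric_polar_reflect_case by lra.
    split; [apply (ratio_lower (theta - p)) | apply (ratio_upper (theta - p))];
      auto using Cmod_ge_0, polar_dist_reflect_sq, sin_mul_reflect; unfold p in *; lra.
Qed.

End Polar_pair.

(** * Sharpness *)

Section Bisector.

Variables theta t : R.
Hypothesis Htheta : 0 < theta < PI.
Hypothesis Ht : 0 < t.

Let a := PI / theta.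
Let x := polar 1 (theta / 2).
Let y := polar (exp (2 * t)) (theta / 2).

Let tau_eq : (ln 1 - ln (exp (2 * t))) / 2 = - t.
Proof. rewrite ln_1, ln_exp. field. Qed.

Let half_diff_eq : (theta / 2 - theta / 2) / 2 = 0.
Proof. field. Qed.

Let half_sum_eq : (theta / 2 + theta / 2) / 2 = theta / 2.
Proof. field. Qed.

Lemma bisector_points_neq : x <> y.
Proof.
  intros E. apply (f_equal Cmod) in E. unfold x, y in E.
  rewrite !Cmod_polar in E by (try apply Rlt_le, exp_pos; lra).
  assert (1 < exp (2 * t)) by (rewrite <- exp_0; apply exp_increasing; lra). lra.
Qed.

Lemma s_metric_bisector :
  s_metric (sector theta) x y = sinh t / sqrt (sinh t ^ 2 + sin (theta / 2) ^ 2).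
Proof.
  assert (He : 0 < exp t) by apply exp_pos.
  assert (Hs : 0 < sin (theta / 2)) by (apply sin_gt_0; lra).
  assert (Hw : 0 < sinh t ^ 2 + sin (theta / 2) ^ 2) by nra.
  assert (Hsq : exp (2 * t) = exp t ^ 2)
    by (replace (exp t ^ 2) with (exp t * exp t) by ring; rewrite <- exp_plus; f_equal; ring).
  unfold x, y. rewrite s_metric_polar_conj_case by (try apply exp_pos; lra).
  rewrite (Cmod_eq_of_sq _ (2 * exp t * sinh t)),
    (Cmod_eq_of_sq _ (2 * exp t * sqrt (sinh t ^ 2 + sin (theta / 2) ^ 2))).
  - field. split; [apply Rgt_not_eq, sqrt_lt_R0 |]; lra.
  - assert (0 <= sqrt (sinh t ^ 2 + sin (theta / 2) ^ 2)) by apply sqrt_pos. nra.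
  - rewrite polar_dist_conj_sq by (try apply exp_pos; lra).
    rewrite tau_eq, half_sum_eq. unfold sinh_sin_sq.
    rewrite sinh_opp, Rpow_mult_distr, pow2_sqrt, Hsq by lra. ring.
  - assert (0 < sinh t) by (apply sinh_pos; lra). nra.
  - rewrite polar_dist_sq by (try apply exp_pos; lra).
    rewrite tau_eq, half_diff_eq. unfold sinh_sin_sq. rewrite sinh_opp, sin_0, Hsq. ring.
Qed.

Lemma th_half_rho_S_bisector : th (rho_S theta x y / 2) = sinh (a * t) / cosh (a * t).
Proof.
  assert (He : 0 < exp (a * t)) by apply exp_pos.
  assert (Hc := cosh_pos (a * t)).
  assert (Ha : a * (theta / 2) = PI / 2) by (unfold a; field; lra).
  assert (HR1 : Rpower 1 a = 1) by (unfold Rpower; rewrite ln_1, Rmult_0_r; apply exp_0).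
  assert (HR2 : Rpower (exp (2 * t)) a = exp (a * t) ^ 2).
  { unfold Rpower. rewrite ln_exp.
    replace (exp (a * t) ^ 2) with (exp (a * t) * exp (a * t)) by ring.
    rewrite <- exp_plus. f_equal. ring. }
  unfold x, y. rewrite th_half_rho_S_polar by (try apply exp_pos; lra).
  rewrite (Cmod_eq_of_sq _ (2 * exp (a * t) * sinh (a * t))),
    (Cmod_eq_of_sq _ (2 * exp (a * t) * cosh (a * t))).
  - field. lra.
  - nra.
  - rewrite polar_image_dist_conj_sq by (try apply exp_pos; lra). fold a.
    rewrite tau_eq, half_sum_eq, HR1, HR2. unfold sinh_sin_sq.
    rewrite Ha, sin_PI2. replace (a * - t) with (- (a * t)) by ring.
    rewrite sinh_opp, Rpow_mult_distr, cosh_sq. ring.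
  - assert (0 < sinh (a * t)) by (apply sinh_pos; unfold a; apply Rmult_lt_0_compat;
      [apply Rdiv_lt_0_compat|]; lra). nra.
  - rewrite polar_image_dist_sq by (try apply exp_pos; lra). fold a.
    rewrite tau_eq, half_diff_eq, HR1, HR2. unfold sinh_sin_sq.
    rewrite Rmult_0_r, sin_0. replace (a * - t) with (- (a * t)) by ring. rewrite sinh_opp. ring.
Qed.

End Bisector.

Lemma sinh_div_cosh_lt_1 (u : R) : sinh u / cosh u < 1.
Proof.
  assert (Hc := cosh_pos u). apply (Rmult_lt_reg_r (cosh u)); [lra|].
  unfold Rdiv. rewrite Rmult_assoc, Rinv_l, Rmult_1_r, Rmult_1_l by lra.
  unfold sinh, cosh. assert (0 < exp (- u)) by apply exp_pos. lra.
Qed.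

Lemma lower_constant_sharp (theta c : R) : 0 < theta < PI -> 1 < c ->
  exists x y : C, sector theta x /\ sector theta y /\ x <> y /\
    th (rho_S theta x y / 2) < c * s_metric (sector theta) x y.
Proof.
  intros Hth Hc.
  set (k := / (c - 1)). assert (Hk : 0 < k) by (apply Rinv_0_lt_compat; lra).
  set (t := arcsinh k).
  assert (Hsh : sinh t = k) by apply sinh_arcsinh.
  assert (Ht : 0 < t) by (rewrite <- arcsinh_0; apply arcsinh_lt, Hk).
  exists (polar 1 (theta / 2)), (polar (exp (2 * t)) (theta / 2)).
  split; [apply sector_polar; lra|]. split; [apply sector_polar; try apply exp_pos; lra|].
  split; [apply bisector_points_neq; lra|].
  rewrite th_half_rho_S_bisector, s_metric_bisector, Hsh by lra.
  eapply Rlt_le_trans; [apply sinh_div_cosh_lt_1|].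
  assert (Hs1 : sin (theta / 2) ^ 2 <= 1).
  { assert (H := sin2_cos2 (theta / 2)). unfold Rsqr in H. nra. }
  assert (Hck : k ^ 2 + sin (theta / 2) ^ 2 <= (c * k) ^ 2).
  { replace ((c * k) ^ 2) with (k ^ 2 + 1 + 2 * k) by (unfold k; field; lra). lra. }
  assert (Hsqrt : 0 < sqrt (k ^ 2 + sin (theta / 2) ^ 2)) by (apply sqrt_lt_R0; nra).
  assert (sqrt (k ^ 2 + sin (theta / 2) ^ 2) <= c * k).
  { rewrite <- (sqrt_pow2 (c * k)) by nra. apply sqrt_le_1_alt, Hck. }
  apply (Rmult_le_reg_r (sqrt (k ^ 2 + sin (theta / 2) ^ 2))); [exact Hsqrt|].
  replace (c * (k / sqrt (k ^ 2 + sin (theta / 2) ^ 2)) * sqrt (k ^ 2 + sin (theta / 2) ^ 2))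
    with (c * k) by (field; lra).
  lra.
Qed.

Lemma cosh_half_ln_lt (q : R) : 1 < q -> cosh (ln q / 2) < q.
Proof.
  intros Hq. unfold cosh. rewrite exp_Ropp.
  assert (Hl : 0 < ln q) by (rewrite <- ln_1; apply ln_increasing; lra).
  set (e := exp (ln q / 2)).
  assert (He : e * e = q).
  { unfold e. rewrite <- exp_plus. replace (ln q / 2 + ln q / 2) with (ln q) by field.
    apply exp_ln. lra. }
  assert (He1 : 1 < e) by (unfold e; rewrite <- exp_0; apply exp_increasing; lra).
  assert (/ e < 1) by (rewrite <- Rinv_1; apply Rinv_lt_contravar; lra).
  nra.
Qed.

Lemma mul_sinh_div_sqrt_lt_tanh (a s0 c t : R) : 1 <= a -> 0 < s0 -> 0 < c -> 0 < t ->
  cosh (a * t) < a * s0 / c ->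
  c * (sinh t / sqrt (sinh t ^ 2 + s0 ^ 2)) < sinh (a * t) / cosh (a * t).
Proof.
  intros Ha Hs0 Hc Ht Hcq.
  assert (Hsh : 0 < sinh t) by (apply sinh_pos, Ht).
  assert (Hch := cosh_pos (a * t)).
  assert (Hw : s0 <= sqrt (sinh t ^ 2 + s0 ^ 2)).
  { rewrite <- (sqrt_pow2 s0) at 1 by lra. apply sqrt_le_1_alt. nra. }
  assert (Hmul := mul_sinh_le a t Ha ltac:(lra)).
  apply Rle_lt_trans with (c * (sinh t / s0)).
  { apply Rmult_le_compat_l; [lra|]. apply Rmult_le_compat_l; [lra|].
    apply Rinv_le_contravar; lra. }
  apply Rle_lt_trans with (sinh (a * t) / (a * s0 / c)).
  { apply (Rmult_le_reg_r (a * s0)); [nra|]. field_simplify; nra. }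
  apply Rmult_lt_compat_l; [nra|]. apply Rinv_lt_contravar; [|lra].
  apply Rmult_lt_0_compat; [lra|]. apply Rdiv_lt_0_compat; nra.
Qed.

Lemma upper_constant_sharp (theta c : R) : 0 < theta < PI ->
  c < PI / theta * sin (theta / 2) ->
  exists x y : C, sector theta x /\ sector theta y /\ x <> y /\
    c * s_metric (sector theta) x y < th (rho_S theta x y / 2).
Proof.
  intros Hth Hc.
  set (a := PI / theta) in *. assert (Ha := PI_div_ge_1 theta Hth). fold a in Ha.
  set (s0 := sin (theta / 2)) in *. assert (Hs0 : 0 < s0) by (apply sin_gt_0; lra).
  (* It suffices to beat the positive constant [c']. *)
  set (c' := Rmax c (a * s0 / 2)).
  assert (Hc' : 0 < c' < a * s0) by (unfold c', Rmax; destruct Rle_dec; nra).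
  set (q := a * s0 / c').
  assert (Hq : 1 < q) by (unfold q; apply (Rmult_lt_reg_r c'); [lra|]; field_simplify; lra).
  set (t := ln q / (2 * a)).
  assert (Ht : 0 < t).
  { apply Rdiv_lt_0_compat; [|lra]. rewrite <- ln_1. apply ln_increasing; lra. }
  exists (polar 1 (theta / 2)), (polar (exp (2 * t)) (theta / 2)).
  split; [apply sector_polar; lra|]. split; [apply sector_polar; try apply exp_pos; lra|].
  split; [apply bisector_points_neq; lra|].
  rewrite th_half_rho_S_bisector, s_metric_bisector by lra. fold a s0.
  eapply Rle_lt_trans; [|apply (mul_sinh_div_sqrt_lt_tanh a s0 c' t); try lra].
  - apply Rmult_le_compat_r; [|apply Rmax_l].
    apply Rdiv_le_0_compat; [apply sinh_nonneg; lra | apply sqrt_lt_R0; nra].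
  - replace (a * t) with (ln q / 2) by (unfold t; field; lra). apply cosh_half_ln_lt, Hq.
Qed.

Theorem theorem4p5 (theta : R) (Htheta : 0 < theta < PI) :
  (forall x y : C, sector theta x -> sector theta y ->
     s_metric (sector theta) x y <= th (rho_S theta x y / 2) /\
     th (rho_S theta x y / 2) <= (PI / theta) * sin (theta / 2) * s_metric (sector theta) x y)
  /\
  (* sharpness of the lower constant 1 *)
  (forall c : R, 1 < c -> exists x y : C, sector theta x /\ sector theta y /\ x <> y /\
     th (rho_S theta x y / 2) < c * s_metric (sector theta) x y)
  /\
  (* sharpness of the upper constant (PI/theta) sin(theta/2) *)
  (forall c : R, c < (PI / theta) * sin (theta / 2) ->
     exists x y : C, sector theta x /\ sector theta y /\ x <> y /\
     c * s_metric (sector theta) x y < th (rho_S theta x y / 2)).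
Proof.
  split; [|split].
  - intros x y Hx Hy.
    destruct (sector_polar_inv theta x Htheta Hx) as (r1 & al & Hr1 & Hal & ->).
    destruct (sector_polar_inv theta y Htheta Hy) as (r2 & be & Hr2 & Hbe & ->).
    apply th_rho_S_bounds_polar; assumption.
  - intros c Hc. apply lower_constant_sharp; assumption.
  - intros c Hc. apply upper_constant_sharp; assumption.
Qed.
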